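(* Let $A$ and $G$ be $n\times n$ symmetric positive definite matrices with $A\preceq G$, and let $u\in\mathbb{R}^n$ satisfy $u^\top(G-A)u>0$. Then $\mathrm{rank}(\mathrm{SR1}(A,G,u)-A)=\mathrm{rank}(G-A)-1$ and $\kappa(\mathrm{SR1}(A,G,u)-A)\le\kappa(G-A)$.
   Context: For a positive semidefinite matrix $B$, $\kappa(B)=\lambda_{\max}(B)/\lambda_{\min}(B)$, where $\lambda_{\min}(B)$ is the smallest nonzero eigenvalue of $B$. $\mathrm{SR1}(A,G,u)=G$ if $(G-A)u=0$, and otherwise $\mathrm{SR1}(A,G,u)=G-\frac{(G-A)uu^\top(G-A)}{u^\top(G-A)u}$. *)

From HB Require Import structures.
From mathcomp Require Import all_boot all_order all_algebra.
From mathcomp Require Import boolp classical_sets reals.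
Set Implicit Arguments. Unset Strict Implicit. Unset Printing Implicit Defensive.
Import Order.TTheory GRing.Theory Num.Theory.
Local Open Scope ring_scope.
Local Open Scope classical_set_scope.

Section Defs.
Variable R : realType.

Definition qform n (B : 'M[R]_n) (v : 'cV[R]_n) : R := (v^T *m B *m v) 0 0.

Definition symmetric n (B : 'M[R]_n) : Prop := B^T = B.

Definition posdef n (B : 'M[R]_n) : Prop :=
  symmetric B /\ forall v : 'cV[R]_n, v != 0 -> 0 < qform B v.

Definition psd n (B : 'M[R]_n) : Prop :=
  symmetric B /\ forall v : 'cV[R]_n, 0 <= qform B v.

Definition loewner_le n (A G : 'M[R]_n) : Prop := psd (G - A).

Definition lambda_max n (B : 'M[R]_n) : R := sup [set a | eigenvalue B a].
Definition lambda_min_nz n (B : 'M[R]_n) : R :=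
  inf [set a | eigenvalue B a /\ a != 0].

(* condition number; for B = 0 it evaluates to 0 (sup/inf of set0 are 0) *)
Definition kappa n (B : 'M[R]_n) : R := lambda_max B / lambda_min_nz B.

Definition SR1 n (A G : 'M[R]_n) (u : 'cV[R]_n) : 'M[R]_n :=
  if (G - A) *m u == 0 then G
  else G - (qform (G - A) u)^-1 *: ((G - A) *m u *m u^T *m (G - A)).

End Defs.

(* Put D = G - A, positive semidefinite, and c = u^T D u > 0. Then
   E := SR1(A,G,u) - A = D - (D u)(u^T D)/c is Wedderburn's rank-one reduction
   of D: the row space of D is that of E plus the row u^T D, which E misses
   because E u = 0 while (u^T D) u = c; so the rank drops by exactly one.
   For the condition number, x^T E x <= x^T D x, so every eigenvalue of E is
   below a Rayleigh quotient of D, hence below lambda_max(D). If E x = a x with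
   a <> 0, then u^T x = 0 and x = D y with |D y|^2 = a y^T D y, which forces a to
   be at least the smallest nonzero eigenvalue of D. Both Rayleigh bounds are
   read off the spectral theorem for D seen as a complex Hermitian matrix, in the
   form x^T D^k x = sum_i d_i^k F_x(i) with nonnegative weights F_x(i). *)

From HB Require Import structures.
From mathcomp Require Import all_boot all_order all_algebra.
From mathcomp Require Import classical_sets reals.
From mathcomp Require Import complex ring zify.
Set Implicit Arguments.
Unset Strict Implicit.
Unset Printing Implicit Defensive.
Import Order.TTheory GRing.Theory Num.Theory.
Local Open Scope ring_scope.

Section Wedderburn.
Variables (F : fieldType) (m n : nat).
Variables (A : 'M[F]_(m, n)) (x : 'cV[F]_n) (y : 'rV[F]_m).

Definition wedderburn_update : 'M[F]_(m, n) :=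
  A - ((y *m A *m x) 0 0)^-1 *: (A *m x *m y *m A).

Local Notation c := ((y *m A *m x) 0 0).
Local Notation B := wedderburn_update.

Lemma wedderburn_updateE (v : 'cV[F]_n) :
  B *m v = A *m v - (c^-1 * (y *m A *m v) 0 0) *: (A *m x).
Proof.
rewrite mulmxBl -scalemxAl -scalerA; congr (_ - _ *: _).
by rewrite -!mulmxA [X in x *m X]mx11_scalar mul_mx_scalar scalemxAr.
Qed.

Hypothesis c_neq0 : c != 0.

Lemma wedderburn_update_mulmx : B *m x = 0.
Proof. by rewrite wedderburn_updateE mulVf // scale1r subrr. Qed.

Lemma mulmx_wedderburn_update : y *m B = 0.
Proof.
rewrite mulmxBr -scalemxAr !mulmxA [X in X *m y]mx11_scalar mul_scalar_mx.
by rewrite -scalemxAl scalerA mulVf // scale1r subrr.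
Qed.

Lemma mxrank_wedderburn_update : \rank B = (\rank A).-1.
Proof.
have sBA : (B <= A)%MS.
  by apply: addmx_sub => //; rewrite eqmx_opp scalemx_sub // submxMl.
have sAB : (A <= B + y *m A)%MS.
  rewrite -{1}[A](subrK (c^-1 *: (A *m x *m y *m A))) addmx_sub_adds //.
  by rewrite scalemx_sub // -mulmxA submxMl.
have yA_notin_B : ~~ (y *m A <= B)%MS.
  apply/negP => /submxP [z yA]; move/eqP: c_neq0; apply.
  by rewrite yA -mulmxA wedderburn_update_mulmx mulmx0 mxE.
have eqA : (A :=: B + y *m A)%MS.
  by apply/eqmxP; rewrite sAB addsmx_sub sBA submxMl.
have ltBA : (\rank B < \rank A)%N.
  rewrite eqA; apply: rank_ltmx; rewrite ltmxE addsmxSl /=.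
  by apply: contra yA_notin_B; apply: submx_trans; exact: addsmxSr.
have leAB : (\rank A <= \rank B + 1)%N.
  rewrite eqA; apply: leq_trans (mxrank_adds_leqif _ _).1 _.
  by rewrite leq_add2l rank_leq_row.
lia.
Qed.

End Wedderburn.

Section Dot.
Variables (R : realType) (n : nat).
Implicit Types x y z : 'cV[R]_n.

Definition dot x y : R := (x^T *m y) 0 0.

Lemma dotC x y : dot x y = dot y x.
Proof. by rewrite /dot !mxE; apply: eq_bigr => i _; rewrite !mxE mulrC. Qed.

Lemma dot_mulmx x (M : 'M[R]_n) y : dot x (M *m y) = dot (M^T *m x) y.
Proof. by rewrite /dot trmx_mul trmxK mulmxA. Qed.

Lemma dotDr x y z : dot x (y + z) = dot x y + dot x z.
Proof. by rewrite /dot mulmxDr mxE. Qed.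

Lemma dotNr x y : dot x (- y) = - dot x y.
Proof. by rewrite /dot mulmxN mxE. Qed.

Lemma dotZr x k y : dot x (k *: y) = k * dot x y.
Proof. by rewrite /dot -scalemxAr mxE. Qed.

Lemma dotBr x y z : dot x (y - z) = dot x y - dot x z.
Proof. by rewrite dotDr dotNr. Qed.

Lemma dotZl x k y : dot (k *: y) x = k * dot y x.
Proof. by rewrite dotC dotZr dotC. Qed.

Lemma dotBl x y z : dot (y - z) x = dot y x - dot z x.
Proof. by rewrite dotC dotBr !(dotC x). Qed.

Lemma dot_gt0 x : x != 0 -> 0 < dot x x.
Proof.
case/matrix0Pn => i [j]; rewrite ord1 => xi_neq0.
rewrite /dot mxE (bigD1 i) //= ltr_pwDl ?sumr_ge0 // => [|k _];
  by rewrite mxE -expr2 ?exprn_even_gt0 ?sqr_ge0.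
Qed.

Lemma qformE (M : 'M[R]_n) x : qform M x = dot x (M *m x).
Proof. by rewrite /qform /dot mulmxA. Qed.

End Dot.

Section UnitaryDiag.
Local Open Scope sesquilinear_scope.
Variables (C : numClosedFieldType) (n : nat).
Variables (P : 'M[C]_n) (s : 'rV[C]_n).
Local Notation M := (P^t* *m diag_mx s *m P).

Lemma unitary_diag_form (z : 'cV[C]_n) :
  (z^t* *m M *m z) 0 0 = \sum_i s 0 i * `|(P *m z) i 0| ^+ 2.
Proof.
have -> : z^t* *m M *m z = (P *m z)^t* *m diag_mx s *m (P *m z).
  by rewrite !mulmxA trmx_mul map_mxM.
rewrite mxE; apply: eq_bigr => i _.
by rewrite mul_mx_diag !mxE normCK mulrAC mulrC [_^* * _]mulrC.
Qed.

Hypothesis P_unitary : P \is unitarymx.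

Lemma unitary_diag_expr k :
  M ^+ k = P^t* *m diag_mx (map_mx (fun a => a ^+ k) s) *m P.
Proof.
elim: k => [|k IHk].
  rewrite expr0 (_ : map_mx _ s = const_mx 1); last by apply/rowP => i; rewrite !mxE.
  by rewrite diag_const_mx mulmx1 -[P^t*]mul1mx mulmxKtV.
rewrite exprS IHk -mulmxE !mulmxA mulmxtVK //; congr (_ *m _).
rewrite -!mulmxA; congr (_ *m _); rewrite mul_diag_mx.
by apply/matrixP => i j; rewrite !mxE exprS mulrnAr.
Qed.

Lemma eigenvalue_unitary_diag i : eigenvalue M (s 0 i).
Proof.
have PPt : P *m P^t* = 1%:M by apply/unitarymxP.
apply/eigenvalueP; exists (row i P).
  rewrite -row_mul !mulmxA PPt mul1mx mul_diag_mx.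
  by apply/rowP => j; rewrite !mxE.
apply: contra_neq (@oner_neq0 C) => Pi0.
move/(congr1 (row i))/rowP/(_ i): PPt.
by rewrite row_mul Pi0 mul0mx row1 !mxE !eqxx => ->.
Qed.

End UnitaryDiag.

Section SpectralWeights.
Local Open Scope sesquilinear_scope.
Variables (R : realType) (n : nat).
Local Notation toC := (real_complex R).

Lemma sym_spectral_weights (D : 'M[R]_n) : D^T = D ->
  exists d : 'I_n -> R, exists F : 'cV[R]_n -> 'I_n -> R,
  [/\ forall i, eigenvalue D (d i), forall x i, 0 <= F x i &
      forall k x, dot x (D ^+ k *m x) = \sum_i d i ^+ k * F x i].
Proof.
move=> DT; set Dc := map_mx toC D.
have toC_real r : toC r \is Num.real by rewrite complex_real.
have Dc_herm : Dc \is hermsymmx.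
  apply/is_hermitianmxP; rewrite expr0 scale1r /Dc map_trmx DT -map_mx_comp.
  by apply/matrixP => i j; rewrite !mxE /= conj_Creal.
set P := spectralmx Dc; set sp := spectral_diag Dc.
have P_unitary : P \is unitarymx := spectral_unitarymx Dc.
have DcE : Dc = P^t* *m diag_mx sp *m P.
  by rewrite -invmx_unitary //; apply/orthomx_spectralP/hermitian_normalmx.
have spE i : toC (complex.Re (sp 0 i)) = sp 0 i.
  by apply: RRe_real; move/mxOverP: (hermitian_spectral_diag_real Dc_herm); apply.
pose Px (x : 'cV[R]_n) := P *m map_mx toC x.
have FE x i : toC (complex.Re (`|Px x i 0| ^+ 2)) = `|Px x i 0| ^+ 2.
  by apply: RRe_real; rewrite rpredX // normr_real.
exists (fun i => complex.Re (sp 0 i)), (fun x i => complex.Re (`|Px x i 0| ^+ 2)).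
split=> [i|x i|k x].
- by rewrite -(eigenvalue_map toC) /= spE -/Dc DcE eigenvalue_unitary_diag.
- by rewrite -(@ler0c R) FE exprn_ge0.
have toC_form : toC (dot x (D ^+ k *m x)) =
    ((map_mx toC x)^t* *m Dc ^+ k *m map_mx toC x) 0 0.
  have -> : (map_mx toC x)^t* = map_mx toC x^T.
    by apply/matrixP => i j; rewrite !mxE conj_Creal.
  by rewrite /Dc -rmorphXn -!map_mxM /dot mulmxA [RHS]mxE.
apply: (@complexI R); rewrite toC_form DcE unitary_diag_expr // unitary_diag_form.
rewrite rmorph_sum; apply: eq_bigr => i _.
by rewrite mxE rmorphM rmorphXn /= spE FE.
Qed.

End SpectralWeights.

Lemma psumr_le0_eq0 (R : numDomainType) (I : finType) (t : I -> R) :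
  (forall i, 0 <= t i) -> \sum_i t i <= 0 -> forall i, t i = 0.
Proof.
move=> t_ge0 sum_le0 i.
have /psumr_eq0P -> // : \sum_i t i = 0 by apply/le_anti; rewrite sum_le0 sumr_ge0.
Qed.

Section WeightBounds.
Variables (R : realType) (n : nat) (D : 'M[R]_n).
Variables (d : 'I_n -> R) (F : 'cV[R]_n -> 'I_n -> R).
Hypothesis F_ge0 : forall x i, 0 <= F x i.
Hypothesis dot_exprE : forall k x, dot x (D ^+ k *m x) = \sum_i d i ^+ k * F x i.

Let dot_weights x : dot x x = \sum_i F x i.
Proof.
move: (dot_exprE 0 x); rewrite expr0 mul1mx => ->.
by apply: eq_bigr => i _; rewrite mul1r.
Qed.

Let dot_mulmx_weights x : dot x (D *m x) = \sum_i d i * F x i.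
Proof. by rewrite -{1}(expr1 D) dot_exprE. Qed.

Lemma weights_ub x a : 0 < dot x x -> a * dot x x <= dot x (D *m x) ->
  exists i, a <= d i.
Proof.
move=> x_gt0 le_ax; apply/existsP; apply: contraTT x_gt0 => /existsPn lt_d.
have lt_da i : d i < a by rewrite ltNge lt_d.
have terms_ge0 i : 0 <= (a - d i) * F x i by rewrite mulr_ge0 // subr_ge0 ltW.
have sum_le0 : \sum_i (a - d i) * F x i <= 0.
  rewrite (eq_bigr (fun i => a * F x i - d i * F x i));
    last by move=> i _; rewrite mulrBl.
  by rewrite sumrB -mulr_sumr -dot_weights -dot_mulmx_weights subr_le0.
have terms_eq0 := psumr_le0_eq0 terms_ge0 sum_le0.
rewrite -leNgt dot_weights big1 // => i _.
by move/eqP: (terms_eq0 i); rewrite mulf_eq0 subr_eq0 gt_eqF // => /eqP.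
Qed.

Lemma weights_lb y a : (forall i, 0 <= d i) ->
  0 < dot y (D ^+ 2 *m y) -> dot y (D ^+ 2 *m y) <= a * dot y (D *m y) ->
  exists i, d i != 0 /\ d i <= a.
Proof.
move=> d_ge0 y_gt0 le_ya.
suff /existsP [i /andP [di_neq0 le_da]] : [exists i, (d i != 0) && (d i <= a)].
  by exists i.
apply: contraTT y_gt0 => /existsPn gt_d.
have lt_ad i : d i != 0 -> a < d i.
  by move=> di_neq0; move: (gt_d i); rewrite di_neq0 -ltNge.
have terms_ge0 i : 0 <= d i * (d i - a) * F y i.
  have [->|di_neq0] := eqVneq (d i) 0; first by rewrite !mul0r.
  by rewrite !mulr_ge0 // subr_ge0 ltW // lt_ad.
have sum_le0 : \sum_i d i * (d i - a) * F y i <= 0.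
  rewrite (eq_bigr (fun i => d i ^+ 2 * F y i - a * (d i * F y i)));
    last by move=> i _; ring.
  by rewrite sumrB -mulr_sumr -dot_exprE -dot_mulmx_weights subr_le0.
have terms_eq0 := psumr_le0_eq0 terms_ge0 sum_le0.
rewrite -leNgt dot_exprE big1 // => i _.
have [->|di_neq0] := eqVneq (d i) 0; first by rewrite expr2 !mul0r.
move/eqP: (terms_eq0 i).
rewrite !mulf_eq0 (negbTE di_neq0) subr_eq0 gt_eqF ?lt_ad //=.
by move/eqP ->; rewrite mulr0.
Qed.

End WeightBounds.

Section SymmetricSpectrum.
Variables (R : realType) (n : nat) (D : 'M[R]_n).
Hypothesis D_sym : D^T = D.

Lemma sym_eigenvector a : eigenvalue D a ->
  exists2 x : 'cV[R]_n, x != 0 & D *m x = a *: x.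
Proof.
case/eigenvalueP => v vD v_neq0; exists v^T; first by rewrite trmx_eq0.
by rewrite -{1}D_sym -trmx_mul vD linearZ.
Qed.

Lemma sym_dot_mulmx2 y : dot (D *m y) (D *m y) = dot y (D ^+ 2 *m y).
Proof. by rewrite dot_mulmx D_sym dotC expr2 -mulmxE mulmxA. Qed.

Lemma sym_eigenvalue_ubound : has_ubound [set a | eigenvalue D a].
Proof.
have [d [F [_ F_ge0 dot_exprE]]] := sym_spectral_weights D_sym.
exists (\big[Order.max/0]_i d i) => a /sym_eigenvector [x x_neq0 Dx].
have [|i le_ad] := weights_ub F_ge0 dot_exprE (dot_gt0 x_neq0) (a := a).
  by rewrite Dx dotZr.
by apply: le_trans le_ad _; apply: le_bigmax.
Qed.

Lemma sym_rayleigh_ub x a : x != 0 -> a * dot x x <= dot x (D *m x) ->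
  exists2 b, eigenvalue D b & a <= b.
Proof.
move=> x_neq0 le_ax; have [d [F [d_eig F_ge0 dot_exprE]]] := sym_spectral_weights D_sym.
have [i le_ad] := weights_ub F_ge0 dot_exprE (dot_gt0 x_neq0) le_ax.
by exists (d i).
Qed.

End SymmetricSpectrum.

Section PsdSpectrum.
Variables (R : realType) (n : nat) (D : 'M[R]_n).
Hypothesis D_psd : psd D.
Let D_sym : D^T = D := D_psd.1.

Lemma psd_eigenvalue_ge0 a : eigenvalue D a -> 0 <= a.
Proof.
case/(sym_eigenvector D_sym) => x x_neq0 Dx.
by have := D_psd.2 x; rewrite qformE Dx dotZr pmulr_lge0 // dot_gt0.
Qed.

Lemma psd_rayleigh_lb y a : D *m y != 0 ->
  dot (D *m y) (D *m y) <= a * dot y (D *m y) ->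
  exists2 b, eigenvalue D b /\ b != 0 & b <= a.
Proof.
move=> Dy_neq0; rewrite sym_dot_mulmx2 // => le_ay.
have [d [F [d_eig F_ge0 dot_exprE]]] := sym_spectral_weights D_sym.
have d_ge0 i : 0 <= d i := psd_eigenvalue_ge0 (d_eig i).
have Dy_gt0 : 0 < dot y (D ^+ 2 *m y) by rewrite -sym_dot_mulmx2 // dot_gt0.
have [i [di_neq0 le_da]] := weights_lb F_ge0 dot_exprE d_ge0 Dy_gt0 le_ay.
by exists (d i).
Qed.

Lemma psd_nz_eigenvalue_lbound :
  exists2 m, 0 < m & forall a, eigenvalue D a -> a != 0 -> m <= a.
Proof.
have [d [F [d_eig F_ge0 dot_exprE]]] := sym_spectral_weights D_sym.
have d_ge0 i : 0 <= d i := psd_eigenvalue_ge0 (d_eig i).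
exists (\big[Order.min/1]_(i | d i != 0) d i).
  by apply: lt_bigmin => // i di_neq0; rewrite lt_def di_neq0 d_ge0.
move=> a /(sym_eigenvector D_sym) [x x_neq0 Dx] a_neq0.
have Dx_gt0 : 0 < dot x (D ^+ 2 *m x).
  by rewrite -sym_dot_mulmx2 // dot_gt0 // Dx scaler_eq0 negb_or a_neq0.
have [|i [di_neq0 le_da]] := weights_lb F_ge0 dot_exprE d_ge0 Dx_gt0 (a := a).
  by rewrite -sym_dot_mulmx2 // Dx dotZl !dotZr.
by apply: le_trans le_da; apply: bigmin_le_cond.
Qed.

Local Open Scope classical_set_scope.

Lemma psd_lambda_min_nz_ge0 : 0 <= lambda_min_nz D.
Proof.
rewrite /lambda_min_nz; set S := [set a | _].
have [->|/set0P S_ne] := eqVneq S set0; first by rewrite inf0.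
by apply: lb_le_inf => // a [Da _]; exact: psd_eigenvalue_ge0 Da.
Qed.

End PsdSpectrum.

Section PsdDowndate.
Variables (R : realType) (n : nat) (D : 'M[R]_n) (u : 'cV[R]_n).
Hypotheses (D_psd : psd D) (Du_gt0 : 0 < qform D u).

Local Notation E := (wedderburn_update D u u^T).
Local Notation c := (qform D u).

Let D_sym : D^T = D := D_psd.1.
Let c_neq0 : c != 0 := lt0r_neq0 Du_gt0.

Let mulmx_downdate x : E *m x = D *m x - (c^-1 * dot u (D *m x)) *: (D *m u).
Proof. by rewrite wedderburn_updateE /dot mulmxA. Qed.

Lemma downdate_sym : E^T = E.
Proof.
rewrite /wedderburn_update linearB linearZ /= !trmx_mul trmxK D_sym.
by rewrite !mulmxA.
Qed.

Lemma downdate_form_le x : dot x (E *m x) <= dot x (D *m x).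
Proof.
rewrite mulmx_downdate dotBr dotZr gerBl dot_mulmx D_sym dotC -mulrA.
by apply: mulr_ge0; [rewrite invr_ge0 ltW | rewrite -expr2 sqr_ge0].
Qed.

Lemma downdate_eigenvalue0 : eigenvalue E 0.
Proof.
apply/eigenvalueP; exists u^T; first by rewrite scale0r mulmx_wedderburn_update.
by apply: contraTneq Du_gt0; rewrite /qform => ->; rewrite !mul0mx mxE ltxx.
Qed.

Lemma downdate_eigenvector_preimage a x : a != 0 -> E *m x = a *: x ->
  exists y, D *m y = x /\ a * dot y x = dot x x.
Proof.
move=> a_neq0 Ex.
have ux0 : dot u x = 0.
  have /eqP : a * dot u x = 0.
    by rewrite -dotZr -Ex /dot mulmxA mulmx_wedderburn_update // mul0mx mxE.
  by rewrite mulf_eq0 (negbTE a_neq0) => /eqP.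
pose y := a^-1 *: (x - (c^-1 * dot u (D *m x)) *: u).
exists y; split.
  by rewrite -scalemxAr mulmxBr -scalemxAr -mulmx_downdate Ex scalerA mulVf ?scale1r.
by rewrite dotZl dotBl dotZl ux0 mulr0 subr0 mulrA mulfV ?mul1r.
Qed.

Local Open Scope classical_set_scope.

Lemma lambda_max_downdate_le : 0 <= lambda_max E <= lambda_max D.
Proof.
have [M ubM] := sym_eigenvalue_ubound D_sym.
have dominated : [set a | eigenvalue E a] `<=` down [set b | eigenvalue D b].
  move=> a /(sym_eigenvector downdate_sym) [x x_neq0 Ex]; apply/downP.
  have [|b Db le_ab] := sym_rayleigh_ub D_sym x_neq0 (a := a).
    by rewrite -dotZr -Ex downdate_form_le.
  by exists b.
have /downP [b Db _] := dominated 0 downdate_eigenvalue0.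
have supD : has_sup [set b | eigenvalue D b] by split; [exists b | exists M].
apply/andP; split.
  apply: ub_le_sup downdate_eigenvalue0.
  by exists M => a /dominated /downP [b' Db' le_ab']; exact: le_trans le_ab' (ubM _ Db').
by apply: sup_le dominated _ supD; exists 0; exact: downdate_eigenvalue0.
Qed.

Lemma lambda_min_nz_downdate_ge : [set a | eigenvalue E a /\ a != 0] !=set0 ->
  0 < lambda_min_nz D <= lambda_min_nz E.
Proof.
case=> a0 [Ea0 a0_neq0].
have dominated a : eigenvalue E a -> a != 0 ->
    exists2 b, eigenvalue D b /\ b != 0 & b <= a.
  move=> /(sym_eigenvector downdate_sym) [x x_neq0 Ex] a_neq0.
  have [y [Dy ayx]] := downdate_eigenvector_preimage a_neq0 Ex.
  by apply: (psd_rayleigh_lb D_psd (y := y)); rewrite Dy // ayx.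
have [m m_gt0 lb_m] := psd_nz_eigenvalue_lbound D_psd.
have [b0 Db0 _] := dominated a0 Ea0 a0_neq0.
have lbD : has_lbound [set b | eigenvalue D b /\ b != 0].
  by exists m => b [Db b_neq0]; exact: lb_m.
apply/andP; split.
  by apply: lt_le_trans m_gt0 (lb_le_inf _ _); [exists b0 | move=> b [Db /(lb_m _ Db)]].
apply: lb_le_inf; first by exists a0.
move=> a [Ea a_neq0]; have [b Db le_ba] := dominated a Ea a_neq0.
exact: le_trans (ge_inf lbD Db) le_ba.
Qed.

Lemma kappa_downdate_le : kappa E <= kappa D.
Proof.
rewrite /kappa; have /andP [sE_ge0 le_sE] := lambda_max_downdate_le.
have iD_ge0 := psd_lambda_min_nz_ge0 D_psd.
(* Without nonzero eigenvalues, lambda_min_nz E = inf set0 = 0, so kappa E = 0. *)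
have [SE0|/set0P SE_ne] := eqVneq [set a | eigenvalue E a /\ a != 0] set0.
  rewrite /lambda_min_nz SE0 inf0 invr0 mulr0.
  by rewrite divr_ge0 // (le_trans sE_ge0 le_sE).
have /andP [iD_gt0 le_iD] := lambda_min_nz_downdate_ge SE_ne.
apply: ler_pM => //; first by rewrite invr_ge0 (le_trans iD_ge0 le_iD).
by rewrite lef_pV2 ?posrE // (lt_le_trans iD_gt0 le_iD).
Qed.

End PsdDowndate.

Lemma SR1_subE (R : realType) n (A G : 'M[R]_n) (u : 'cV[R]_n) :
  0 < qform (G - A) u -> SR1 A G u - A = wedderburn_update (G - A) u u^T.
Proof.
move=> Du_gt0; rewrite /SR1 ifN; first by rewrite addrAC.
by apply: contraTneq Du_gt0; rewrite qformE => ->; rewrite /dot mulmx0 mxE ltxx.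
Qed.

Theorem lemma3 (R : realType) (n : nat) (A G : 'M[R]_n) (u : 'cV[R]_n) :
  posdef A -> posdef G -> loewner_le A G -> 0 < qform (G - A) u ->
  \rank (SR1 A G u - A) = (\rank (G - A)).-1 :> nat /\
  kappa (SR1 A G u - A) <= kappa (G - A).
Proof.
move=> _ _ GA_psd GAu_gt0; rewrite SR1_subE //; split.
  exact: mxrank_wedderburn_update (lt0r_neq0 GAu_gt0).
exact: kappa_downdate_le.
Qed.
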